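(* Let $S$ be an infinite set and $\mathcal{F}\subseteq 2^S$ countable, nontrivial, and closed under finite unions and finite intersections. Let $\mathbf{A}=(A_1,\dots,A_k)$ be a classification problem with $k\ge 2$, and let $C\subseteq S\setminus(A_1\cup\dots\cup A_k)$ be $\mathcal{F}$-cohesive with $(C,A_i)\notin\mathit{class}_2(\mathcal{F})$ for $1\le i\le k$. Then there exists $\mathbf{B}\le\mathbf{A}$ with $|\mathbf{B}|=k$ and $\mathbf{B}\in\mathit{core}_k(\mathcal{F})$.
   Context: $\mathcal{F}$ is nontrivial if $\emptyset,S\in\mathcal{F}$ and for all $Q\in\mathcal{F}$ and finite $E\subseteq S$ both $Q\cup E\in\mathcal{F}$ and $Q\setminus E\in\mathcal{F}$. A classification problem is a vector $(A_1,\dots,A_k)$, $k\ge1$, of pairwise disjoint infinite subsets of $S$, of length $k$. For vectors $\mathbf{B}=(B_1,\dots,B_m)$, $\mathbf{Q}=(Q_1,\dots,Q_k)$, $\mathbf{B}\le\mathbf{Q}$ means $1\le m\le k$ and there is an injective $\sigma:\{1,\dots,m\}\to\{1,\dots,k\}$ with $B_i\subseteq Q_{\sigma(i)}$. An $\mathcal{F}$-partition is a vector of pairwise disjoint members of $\mathcal{F}$ whose union is $S$. $\mathit{class}_k(\mathcal{F})$: classification problems of length $k$ with $\mathbf{A}\le\mathbf{Q}$ for some $\mathcal{F}$-partition $\mathbf{Q}$ of length $k$ (for $k=2$, $(C,A_i)\in\mathit{class}_2(\mathcal{F})$ requires in particular $C$ infinite). For $k>1$, $\mathit{core}_k(\mathcal{F})$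 is the set of classification problems $\mathbf{A}$ of length $k$ (in particular with infinite, pairwise disjoint components) such that every classification problem $\mathbf{A}'\le\mathbf{A}$ with $|\mathbf{A}'|>1$ satisfies $\mathbf{A}'\notin\mathit{class}_{|\mathbf{A}'|}(\mathcal{F})$. A set $A\subseteq S$ is $\mathcal{F}$-cohesive if $A$ is infinite and for every $Q$ with $Q\in\mathcal{F}$ and $S\setminus Q\in\mathcal{F}$, either $A\cap Q$ or $A\setminus Q$ is finite. *)

From mathcomp Require Import all_boot.
From mathcomp Require Import boolp classical_sets cardinality.
Set Implicit Arguments. Unset Strict Implicit. Unset Printing Implicit Defensive.
Local Open Scope classical_set_scope.

(* The ambient set S is the whole carrier type T; subsets of S are [set T].
   Vectors of length k are functions 'I_k -> set T (index i : 'I_k stands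
   for the paper's index i+1). *)

Section Defs.
Variable T : Type.

Definition nontrivial (F : set (set T)) : Prop :=
  F set0 /\ F setT /\
  (forall Q E, F Q -> finite_set E -> F (Q `|` E) /\ F (Q `\` E)).

Definition closed_fin_union_inter (F : set (set T)) : Prop :=
  forall Q R, F Q -> F R -> F (Q `|` R) /\ F (Q `&` R).

Definition class_problem (k : nat) (A : 'I_k -> set T) : Prop :=
  (1 <= k)%N /\ (forall i, infinite_set (A i)) /\
  (forall i j, i != j -> A i `&` A j = set0).

Definition vle (m k : nat) (B : 'I_m -> set T) (Q : 'I_k -> set T) : Prop :=
  (1 <= m)%N /\ (m <= k)%N /\
  exists sigma : 'I_m -> 'I_k, injective sigma /\ forall i, B i `<=` Q (sigma i).

Definition F_partition (F : set (set T)) (k : nat) (Q : 'I_k -> set T) : Prop :=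
  (forall i, F (Q i)) /\ (forall i j, i != j -> Q i `&` Q j = set0) /\
  \bigcup_(i in [set: 'I_k]) Q i = setT.

Definition class_k (F : set (set T)) (k : nat) (A : 'I_k -> set T) : Prop :=
  class_problem A /\ exists Q : 'I_k -> set T, F_partition F Q /\ vle A Q.

Definition core_k (F : set (set T)) (k : nat) (A : 'I_k -> set T) : Prop :=
  class_problem A /\
  forall (m : nat) (A' : 'I_m -> set T),
    class_problem A' -> vle A' A -> (1 < m)%N -> ~ class_k F A'.

Definition F_cohesive (F : set (set T)) (A : set T) : Prop :=
  infinite_set A /\
  forall Q, F Q -> F (~` Q) -> finite_set (A `&` Q) \/ finite_set (A `\` Q).

Definition pair2 (C D : set T) : 'I_2 -> set T :=
  fun i => if val i == 0%N then C else D.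

End Defs.

From mathcomp Require Import all_boot.
From mathcomp Require Import finmap boolp classical_sets cardinality.
Set Implicit Arguments. Unset Strict Implicit. Unset Printing Implicit Defensive.
Local Open Scope classical_set_scope.

(* Let G be the family of sets Q with Q and ~Q in F that contain C up to a
   finite set.  If some Q in G met some A_i in only finitely many points,
   correcting Q by finitely many points would separate C from A_i by an
   F-partition, so every Q in G meets every A_i infinitely.  G is countable
   and closed under intersections, hence has a decreasing base (P_n), and a
   diagonal choice of ever larger finite sets in A_i ∩ P_n yields infinite
   B_i ⊆ A_i almost contained in every P_n.  By cohesiveness of C, every Q
   with Q and ~Q in F, or its complement, belongs to G, so each such Q
   contains almost all of every B_i or almost none of any of them.  Two
   distinct blocks of an F-partition cannot both do that, so no subproblem
   of B of length at least 2 is F-classifiable. *)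

Section Classification.
Variables (T : Type) (F : set (set T)).

Definition clopen (Q : set T) := F Q /\ F (~` Q).

Definition clopen_homogeneous (k : nat) (B : 'I_k -> set T) :=
  forall Q, clopen Q ->
  (forall i, finite_set (B i `\` Q)) \/ (forall i, finite_set (B i `&` Q)).

Lemma class_k_pair2 (Q X Y : set T) :
  clopen Q -> X `<=` Q -> Y `<=` ~` Q -> infinite_set X -> infinite_set Y ->
  class_k F (pair2 X Y).
Proof.
move=> [FQ FQc] XQ YQ iX iY.
have XY : X `&` Y = set0 by apply/seteqP; split=> x // [/XQ Qx /YQ].
split.
  split=> //; split; first by move=> [[|[|//]] ?].
  by move=> [[|[|//]] ?] [[|[|//]] ?] //= _; rewrite // setIC.
exists (pair2 Q (~` Q)); split.
  split; first by move=> [[|[|//]] ?].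
  split.
    by move=> [[|[|//]] ?] [[|[|//]] ?] //= _; apply/seteqP; split=> x // [].
  apply/seteqP; split=> x // _.
  have [Qx|nQx] := pselect (Q x).
    by exists (@Ordinal 2 0 isT).
  by exists (@Ordinal 2 1 isT).
split=> //; split=> //; exists id; split=> //.
by move=> [[|[|//]] ?].
Qed.

Hypotheses (F0 : F set0) (F_closed : closed_fin_union_inter F).

Lemma F_partition_clopen (m : nat) (Q : 'I_m -> set T) :
  F_partition F Q -> forall j, clopen (Q j).
Proof.
move=> [FQ [dQ cQ]] j; split=> //.
have -> : ~` Q j = \big[setU/set0]_(l <- enum 'I_m | l != j) Q l.
  rewrite -bigcup_seq_cond; apply/seteqP; split=> x /=.
    move=> nQx; have : [set: T] x by [].
    rewrite -cQ => -[l _ Qlx]; exists l => //=.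
    by rewrite mem_enum; apply/eqP=> lj; apply: nQx; rewrite -lj.
  move=> [l /andP[_ lj] Qlx] Qjx.
  by have : (Q l `&` Q j) x by []; rewrite dQ.
by apply: big_ind => // X Y FX FY; case: (F_closed FX FY).
Qed.

Lemma core_k_homogeneous (k : nat) (B : 'I_k -> set T) :
  class_problem B -> clopen_homogeneous B -> core_k F B.
Proof.
move=> cpB homB; split=> // m B' [_ [B'inf _]] [_ [_ [s [_ sB]]]] m2.
move=> [_ [Q [Qpart [_ [_ [t [tinj tQ]]]]]]].
pose i0 : 'I_m := Ordinal (ltnW m2); pose i1 : 'I_m := Ordinal m2.
have disQ : Q (t i1) `&` Q (t i0) = set0.
  by apply: Qpart.2.1; apply/eqP=> /tinj /(congr1 val).
case: (homB _ (F_partition_clopen Qpart (t i0))) => [almost_in|almost_out].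
  apply: (B'inf i1); apply: sub_finite_set (almost_in (s i1)) => x B'x.
  split; first exact: sB.
  move=> Qx; have : (Q (t i1) `&` Q (t i0)) x by split; [apply: tQ|].
  by rewrite disQ.
apply: (B'inf i0); apply: sub_finite_set (almost_out (s i0)) => x B'x.
by split; [apply: sB | apply: tQ].
Qed.

End Classification.

Lemma countable_decreasing_base (T : Type) (G : set (set T)) (Q0 : set T) :
  countable G -> G Q0 -> (forall Q R, G Q -> G R -> G (Q `&` R)) ->
  exists P : nat -> set T, [/\ forall n, G (P n),
    forall n m, (n <= m)%N -> P m `<=` P n & forall Q, G Q -> exists n, P n `<=` Q].
Proof.
move=> /pcard_surjP [g g_onto] GQ0 GI.
pose e n := if pselect (G (g n)) then g n else Q0.
have eG n : G (e n) by rewrite /e; case: pselect.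
pose P := fix P n := if n is n'.+1 then P n' `&` e n else e 0%N.
have PG n : G (P n) by elim: n => [|n IHn] //=; apply: GI.
have Pe n : P n `<=` e n by case: n => [|n] //= x [].
exists P; split=> //.
  move=> n m; elim: m => [|m IHm]; first by rewrite leqn0 => /eqP ->.
  rewrite leq_eqVlt => /orP[/eqP -> //|].
  by rewrite ltnS => /IHm Pmn x [Pmx _]; apply: Pmn.
move=> Q GQ; have [n _ gnQ] := g_onto Q GQ; exists n.
by move: (Pe n); rewrite /e gnQ; case: pselect.
Qed.

Lemma pseudo_intersection (T : choiceType) (I : Type) (A : I -> set T)
    (P : nat -> set T) :
  (forall n m, (n <= m)%N -> P m `<=` P n) ->
  (forall i n, infinite_set (A i `&` P n)) ->
  exists B : I -> set T, [/\ forall i, B i `<=` A i,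
    forall i, infinite_set (B i) & forall i n, finite_set (B i `\` P n)].
Proof.
move=> Pdec AP.
have /choice [E HE] : forall p : I * nat, exists E : {fset T},
    [set` E] `<=` A p.1 `&` P p.2 /\ (p.2 <= #|` E|)%N.
  by move=> [i n]; have [E ? ?] := infinite_set_fset n (AP i n); exists E.
exists (fun i => \bigcup_(n in [set: nat]) [set` E (i, n)]); split.
- by move=> i x [n _ /(HE (i, n)).1 []].
- move=> i; apply/infinite_set_fsetP => n.
  by exists (E (i, n)); [move=> x Ex; exists n | apply: (HE (i, n)).2].
- move=> i n; apply: (@sub_finite_set _ _ (\bigcup_(m in `I_n) [set` E (i, m)])).
    move=> x [[m _ Ex] nPx]; exists m => //=.
    rewrite ltnNge; apply/negP => nm; apply: nPx; apply: Pdec nm _ _.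
    exact: ((HE (i, m)).1 x Ex).2.
  by apply: bigcup_finite => [|m _]; [exact: finite_II | exact: finite_fset].
Qed.

Section CohesiveSet.
Variables (T : Type) (F : set (set T)) (C : set T).
Hypotheses (F_nontrivial : nontrivial F) (F_closed : closed_fin_union_inter F).

Definition clopen_around (Q : set T) := clopen F Q /\ finite_set (C `\` Q).

Lemma clopen_aroundT : clopen_around setT.
Proof.
have [F0 [FT _]] := F_nontrivial.
by split; [split=> //; rewrite setCT | rewrite setDT].
Qed.

Lemma clopen_aroundI (Q R : set T) :
  clopen_around Q -> clopen_around R -> clopen_around (Q `&` R).
Proof.
move=> [[FQ FQc] finQ] [[FR FRc] finR]; split.
  by split; [apply: (F_closed FQ FR).2 | rewrite setCI; apply: (F_closed FQc FRc).1].
by rewrite setDIr finite_setU.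
Qed.

Lemma cohesive_clopen_around (Q : set T) :
  F_cohesive F C -> clopen F Q -> clopen_around Q \/ clopen_around (~` Q).
Proof.
move=> [_ Ccoh] [FQ FQc]; case: (Ccoh Q FQ FQc) => [finCIQ|finCDQ].
  by right; split; [rewrite /clopen setCK | rewrite setDE setCK].
by left.
Qed.

Lemma clopen_around_meets (D Q : set T) :
  infinite_set C -> C `<=` ~` D -> infinite_set D -> ~ class_k F (pair2 C D) ->
  clopen_around Q -> infinite_set (D `&` Q).
Proof.
move=> Cinf CD Dinf notCD [[FQ FQc] finCQ] finDQ.
have [_ [_ Ffin]] := F_nontrivial.
(* Move the finitely many points of C outside Q in, and those of D inside Q out. *)
pose Q' := (Q `|` (C `\` Q)) `\` (D `&` Q).
apply: notCD; apply: (@class_k_pair2 _ _ Q') => //.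
- split; first exact: (Ffin _ _ (Ffin _ _ FQ finCQ).1 finDQ).2.
  rewrite /Q' setDE setCI setCK setCU -setDE.
  exact: (Ffin _ _ (Ffin _ _ FQc finCQ).2 finDQ).1.
- move=> x Cx; split; first by have [Qx|nQx] := pselect (Q x); [left|right].
  by move=> [Dx _]; apply: CD Cx Dx.
- move=> x Dx [[Qx|[Cx _]] nDQx]; first exact: nDQx.
  exact: CD Cx Dx.
Qed.

End CohesiveSet.

Theorem theorem3p8 (T : Type) (F : set (set T)) (k : nat)
    (A : 'I_k -> set T) (C : set T) :
  infinite_set [set: T] ->
  countable F -> nontrivial F -> closed_fin_union_inter F ->
  class_problem A -> (2 <= k)%N ->
  C `<=` ~` (\bigcup_(i in [set: 'I_k]) A i) ->
  F_cohesive F C ->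
  (forall i, ~ class_k F (pair2 C (A i))) ->
  exists B : 'I_k -> set T, vle B A /\ core_k F B.
Proof.
elim/Pchoice: T => T in F A C *.
move=> _ cF ntF clF [k1 [Ainf Adis]] _ CA Ccoh notCA.
have cG : countable (clopen_around F C).
  by apply: sub_countable cF; apply: subset_card_le => Q [[]].
have [P [PG Pdec Pbase]] := countable_decreasing_base cG (clopen_aroundT C ntF)
  (@clopen_aroundI _ _ C clF).
have CAi i : C `<=` ~` A i by move=> x /CA nAx Ax; apply: nAx; exists i.
have [B [BA Binf BP]] := pseudo_intersection Pdec (fun i n =>
  clopen_around_meets ntF Ccoh.1 (CAi i) (Ainf i) (notCA i) (PG n)).
exists B; split.
  by split=> //; split=> //; exists id; split=> // i; apply: BA.
apply: (core_k_homogeneous ntF.1 clF) => [|Q Qclopen].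
  split=> //; split=> // i j ij; apply/seteqP; split=> x // [/BA Aix /BA Ajx].
  by have : (A i `&` A j) x by []; rewrite Adis.
have [QG|QcG] := cohesive_clopen_around Ccoh Qclopen; [left|right] => i.
  have [n PQ] := Pbase _ QG.
  by apply: sub_finite_set (BP i n) => x [Bx nQx]; split=> // /PQ.
have [n PQc] := Pbase _ QcG.
by apply: sub_finite_set (BP i n) => x [Bx Qx]; split=> // /PQc.
Qed.
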